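(* Let $X$ be a complex torus of dimension $g$ with period matrix $(\tau\ \ I_g)$, $\tau=(\tau_{ij})\in M_g(\mathbb{C})$, $\det(\operatorname{Im}\tau)\neq0$, and let $\mathfrak{d}=[\mathbb{Q}(\{\tau_{ij}\}):\mathbb{Q}]$. For $1\le i<j\le g$ let $$\mathfrak{d}_{ij}=\dim_{\mathbb{Q}}\big\langle 1,\ \tau_{ki},\ \tau_{kj},\ \tau_{li}\tau_{kj}-\tau_{ki}\tau_{lj}\ :\ l,k=1,\dots,g\big\rangle_{\mathbb{Q}}.$$ Then the Picard number of $X$ satisfies $$\rho(X)\ \ge\ 2g^2-g-\sum_{1\le i<j\le g}\mathfrak{d}_{ij}\ \ge\ g^2-g(g-1)\Big(\frac{\mathfrak{d}}{2}-1\Big).$$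
   Context: A complex torus of dimension $g$ with period matrix $\Pi=(\tau\ \ I_g)$ is $X=\mathbb{C}^g/\Lambda$, where $\Lambda$ is the lattice generated by the $2g$ columns of $\Pi$. The Picard number $\rho(X)$ is the rank of the Néron–Severi group $\mathrm{NS}(X)$. *)

From HB Require Import structures.
From mathcomp Require Import all_boot all_order all_algebra.
From mathcomp Require Import boolp reals complex.
Set Implicit Arguments. Unset Strict Implicit. Unset Printing Implicit Defensive.
Import Order.TTheory GRing.Theory Num.Theory.
Local Open Scope ring_scope.
Local Open Scope complex_scope.

Section Torus.
Variable R : realType.
Notation C := R[i].

Definition qindep (s : seq C) : Prop :=
  forall c : seq rat, size c = size s ->
    \sum_(k < size s) ratr c`_k * s`_k = 0 -> forall k, c`_k = 0.

(** dim_Q of the Q-span of a finite family: the maximal size of a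
    Q-linearly independent subfamily. *)
Definition qspan_dim (s : seq C) : nat :=
  (\max_(m : (size s).-tuple bool | `[< qindep (mask m s) >]) count id m)%N.

(** Subfields of C (they automatically contain Q). *)
Definition subfield_pred (S : C -> Prop) : Prop :=
  [/\ S 1, forall x y, S x -> S y -> S (x - y),
      forall x y, S x -> S y -> S (x * y) & forall x, S x -> S x^-1].

Definition gen_field (g : nat) (tau : 'M[C]_g) (x : C) : Prop :=
  forall S, subfield_pred S -> (forall i j, S (tau i j)) -> S x.

Definition field_degree (g : nat) (tau : 'M[C]_g) (d : nat) : Prop :=
  exists b : seq C, [/\ size b = d, forall x, x \in b -> gen_field tau x,
    qindep b &
    forall x, gen_field tau x ->
      exists c : seq rat, size c = size b /\ x = \sum_(k < size b) ratr c`_k * b`_k].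

(** The spanning family defining d_ij (for 0-based indices i < j). *)
Definition dij_family (g : nat) (tau : 'M[C]_g) (i j : 'I_g) : seq C :=
  1 :: [seq tau k i | k <- enum 'I_g] ++ [seq tau k j | k <- enum 'I_g]
    ++ [seq tau l i * tau k j - tau k i * tau l j | l <- enum 'I_g, k <- enum 'I_g].

Definition dij (g : nat) (tau : 'M[C]_g) (i j : 'I_g) : nat :=
  qspan_dim (dij_family tau i j).

(** Real-coordinate matrix of x |-> Pi x, Pi = (tau I_g): R^{2g} -> C^g = R^g x R^g
    (real parts, then imaginary parts). *)
Definition period_real (g : nat) (tau : 'M[C]_g) : 'M[R]_(g + g) :=
  block_mx (map_mx (fun z : C => complex.Re z) tau) 1%:M
           (map_mx (fun z : C => complex.Im z) tau) 0.

(** Multiplication by i on C^g = R^g x R^g. *)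
Definition mul_i (g : nat) : 'M[R]_(g + g) := block_mx 0 (- 1%:M) 1%:M 0.

(** The complex structure J on Lambda (x) R = R^{2g} in lattice coordinates. *)
Definition cplx_struct (g : nat) (tau : 'M[C]_g) : 'M[R]_(g + g) :=
  invmx (period_real tau) *m mul_i g *m period_real tau.

(** NS(X) (x) Q: rational alternating forms E on Lambda (matrix w.r.t. the
    basis given by the columns of Pi) with E(ix, iy) = E(x, y). *)
Definition NSQ (g : nat) (tau : 'M[C]_g) (M : 'M[rat]_(g + g)) : Prop :=
  M^T = - M /\
  let Mr := map_mx (fun q : rat => (ratr q : R)) M in
  (cplx_struct tau)^T *m Mr *m cplx_struct tau = Mr.

(** Picard number = rank NS(X) = dim_Q NS(X) (x) Q. *)
Definition picard_number (g : nat) (tau : 'M[C]_g) : nat :=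
  (\max_(n < ((g + g) ^ 2).+1 |
     `[< exists s : seq 'M[rat]_(g + g),
           [/\ size s = val n, free s & forall M, M \in s -> NSQ tau M] >]) val n)%N.

End Torus.

From HB Require Import structures.
From mathcomp Require Import all_boot all_order all_algebra.
From mathcomp Require Import boolp reals complex.
From mathcomp Require Import zify ring lra.
Set Implicit Arguments. Unset Strict Implicit. Unset Printing Implicit Defensive.
Import Order.TTheory GRing.Theory Num.Theory.
Local Open Scope ring_scope.

(* A rational alternating form E on Lambda, with matrix [[A, B], [-B^T, D]] in the
   basis of columns of (tau I), lies in NS(X) (x) Q as soon as the alternating complex
   matrix A + tau^T B^T - B tau + tau^T D tau vanishes (this direction uses
   det Im tau <> 0), i.e. as soon as its entries (i, j) with i < j vanish.  Twice such
   an entry is a rational combination of the family defining d_ij whose coefficients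
   depend linearly on E; since the Q-relations of that family have codimension d_ij,
   each pair (i, j) cuts out a subspace of codimension at most d_ij of the
   (2g^2 - g)-dimensional space of alternating forms, which gives the first inequality.
   The second one follows from d_ij <= d, as the family lies in Q(tau_ij). *)

Lemma card_ltn_pairs n : #|[pred p : 'I_n * 'I_n | (p.1 < p.2)%N]| = 'C(n, 2).
Proof.
rewrite -card_ltn_sorted_tuples.
pose f (p : 'I_n * 'I_n) := [tuple p.1; p.2].
have f_inj : injective f by move=> [a b] [c d] /(congr1 val) [-> ->].
rewrite -(card_imset _ f_inj); apply: eq_card => t; rewrite inE.
apply/imsetP/idP => [[[a b] ab ->]|]; first by rewrite /= andbT.
case: t => [[|a [|b []]] //= st] ab; exists (a, b); first by move: ab; rewrite /= andbT.
exact: val_inj.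
Qed.

Lemma sum_ltn_pairs n : (\sum_(i < n) \sum_(j < n | (i < j)%N) 1 = 'C(n, 2))%N.
Proof. by rewrite pair_big_dep /= sum1_card card_ltn_pairs. Qed.

Lemma mul2_bin2 n : (2 * 'C(n, 2) = n * n.-1)%N.
Proof. by rewrite bin2 mul2n halfK oddM; case: n => //= n; rewrite andNb subn0. Qed.

Lemma alternating_eq0 (V : numDomainType) n (E : 'M[V]_n) :
  E^T = - E -> (forall i j : 'I_n, (i < j)%N -> E i j = 0) -> E = 0.
Proof.
move=> /matrixP E_anti E_up; apply/matrixP => i j; rewrite mxE.
have E_swap a b : E a b = - E b a by have := E_anti b a; rewrite !mxE.
case: (ltngtP i j) => [/E_up //|/E_up ji|/val_inj <-]; first by rewrite E_swap ji oppr0.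
by apply/eqP; rewrite -eqNr -E_swap.
Qed.

Lemma codim_bigcapmx (F : fieldType) n (I : finType) (P : pred I) (U : I -> 'M[F]_n) :
  (n - \rank (\bigcap_(i | P i) U i)%MS <= \sum_(i | P i) (n - \rank (U i)))%N.
Proof.
apply: (big_rec2 (fun V d => n - \rank V <= d)%N); first by rewrite mxrank1 subnn.
move=> i V d _ le_Vd; have := mxrank_sum_cap (U i) V.
have := rank_leq_col (U i + V)%MS; have := rank_leq_col (U i); have := rank_leq_col V.
lia.
Qed.

Section AlternatingMatrices.
Variables (F : fieldType) (m : nat).

Definition alt_index := {p : 'I_m * 'I_m | (p.1 < p.2)%N}.
Local Notation N := #|{: alt_index}|.

Lemma card_alt_index : N = 'C(m, 2).
Proof. by rewrite card_sig card_ltn_pairs. Qed.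

Definition alt_pair (t : 'I_N) : 'I_m * 'I_m := val (enum_val t).

Definition alt_basis (t : 'I_N) : 'M[F]_m :=
  delta_mx (alt_pair t).1 (alt_pair t).2 - delta_mx (alt_pair t).2 (alt_pair t).1.

Definition alt_mx (x : 'rV[F]_N) : 'M[F]_m := \sum_t x 0 t *: alt_basis t.

Lemma alt_pair_lt t : ((alt_pair t).1 < (alt_pair t).2)%N.
Proof. exact: valP (enum_val t). Qed.

Lemma alt_pair_inj : injective alt_pair.
Proof. by move=> t t' /val_inj /enum_val_inj. Qed.

Lemma alt_mxE x a b : alt_mx x a b = \sum_t x 0 t * alt_basis t a b.
Proof. by rewrite summxE; apply: eq_bigr => t _; rewrite mxE. Qed.

Lemma alt_mx_tr x : (alt_mx x)^T = - alt_mx x.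
Proof.
rewrite /alt_mx linear_sum /= -sumrN; apply: eq_bigr => t _.
by rewrite linearZ /= /alt_basis linearB /= !trmx_delta -scalerN opprB.
Qed.

Lemma alt_mx_mulmx r (w : 'rV[F]_r) (V : 'M[F]_(r, N)) :
  alt_mx (w *m V) = \sum_l w 0 l *: alt_mx (row l V).
Proof.
rewrite /alt_mx; under eq_bigr do rewrite mxE scaler_suml.
rewrite exchange_big; apply: eq_bigr => l _; rewrite scaler_sumr.
by apply: eq_bigr => t _; rewrite !mxE scalerA.
Qed.

Lemma alt_basis_entry t t' : alt_basis t' (alt_pair t).1 (alt_pair t).2 = (t == t')%:R.
Proof.
have lt_t := alt_pair_lt t; have lt_t' := alt_pair_lt t'.
rewrite !mxE -[t == t'](inj_eq alt_pair_inj) -pair_eqE /= andbC.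
have -> : ((alt_pair t).1 == (alt_pair t').2) && ((alt_pair t).2 == (alt_pair t').1) = false.
  by apply/negbTE/negP => /andP[/eqP e1 /eqP e2]; move: lt_t lt_t'; rewrite e1 e2; lia.
by rewrite subr0.
Qed.

Lemma alt_mx_entry x t : alt_mx x (alt_pair t).1 (alt_pair t).2 = x 0 t.
Proof.
rewrite alt_mxE (bigD1 t) //= alt_basis_entry eqxx mulr1 big1 ?addr0 // => t' t't.
by rewrite alt_basis_entry eq_sym (negbTE t't) mulr0.
Qed.

Lemma alt_mx_eq0 x : alt_mx x = 0 -> x = 0.
Proof. by move=> x0; apply/rowP => t; rewrite -alt_mx_entry x0 !mxE. Qed.
End AlternatingMatrices.

Section QSpan.
Variable R : realType.
Local Notation C := R[i].
Implicit Types s : seq C.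

Definition qcomb s (v : 'rV[rat]_(size s)) : C := \sum_(k < size s) ratr (v 0 k) * s`_k.

Lemma qcomb0 s : qcomb (0 : 'rV_(size s)) = 0.
Proof. by rewrite /qcomb big1 // => k _; rewrite mxE rmorph0 mul0r. Qed.

Lemma qcombD s v w : qcomb (v + w) = qcomb v + qcomb (s := s) w.
Proof. by rewrite /qcomb -big_split; apply: eq_bigr => k _; rewrite mxE rmorphD mulrDl. Qed.

Lemma qcombZ s a v : qcomb (a *: v) = ratr a * qcomb (s := s) v.
Proof. by rewrite /qcomb mulr_sumr; apply: eq_bigr => k _; rewrite mxE rmorphM mulrA. Qed.

Lemma relation_space s : exists K : 'M[rat]_(size s),
  forall w, (w <= K)%MS <-> qcomb w = 0.
Proof.
pose P (r : nat) := `[< exists2 K : 'M[rat]_(size s), \rank K = r &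
                  forall w, (w <= K)%MS -> qcomb w = 0 >].
have P0 : P 0%N.
  apply/asboolP; exists 0 => [|w]; first exact: mxrank0.
  by rewrite submx0 => /eqP ->; exact: qcomb0.
have Pbound (r : nat) : P r -> (r <= size s)%N by case/asboolP=> K <- _; exact: rank_leq_col.
have [r /asboolP [K rK HK] Kmax] := ex_maxnP (ex_intro P 0%N P0) Pbound.
exists K => w; split=> [/HK //|qw0]; apply/negPn/negP => wK.
have Kw_rel v : (v <= K + w)%MS -> qcomb v = 0.
  case/sub_addsmxP=> -[a b] /= ->.
  by rewrite [b]mx11_scalar mul_scalar_mx qcombD qcombZ qw0 mulr0 addr0 HK ?submxMl.
have Kw_le : (\rank (K + w) <= r)%N by apply: Kmax; apply/asboolP; exists (K + w)%MS.
have : (K < K + w)%MS by rewrite ltmxE addsmxSl addsmx_sub submx_refl.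
by rewrite ltmxErank rK ltnNge Kw_le andbF.
Qed.

Fixpoint scatter (m : bitseq) (c : seq rat) : seq rat :=
  if m is b :: m' then
    if b then head 0 c :: scatter m' (behead c) else 0 :: scatter m' c
  else [::].

Lemma size_scatter m c : size (scatter m c) = size m.
Proof. by elim: m c => [|[] m IH] c //=; rewrite IH. Qed.

Lemma nth_scatter_false m c i : nth false m i = false -> (scatter m c)`_i = 0.
Proof. by elim: m c i => [|[] m IH] c [|i] //= /IH. Qed.

Lemma scatter_eq0 m c : (size c <= count id m)%N ->
  (forall i, (scatter m c)`_i = 0) -> forall k, c`_k = 0.
Proof.
elim: m c => [|b m IH] c /= sc c0 k.
  by move: sc; rewrite leqn0 => /nilP ->; rewrite nth_nil.
case: b c0 sc => /= [|] c0 sc; last exact: IH (fun i => c0 i.+1) k.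
case: c c0 sc => [|x c] c0 sc; first by rewrite nth_nil.
by case: k => [|k]; [exact: c0 0%N | exact: IH (fun i => c0 i.+1) k].
Qed.

Lemma qcomb_mask s m (c : seq rat) : size m = size s ->
  \sum_(k < size (mask m s)) ratr c`_k * (mask m s)`_k =
  \sum_(k < size s) ratr (scatter m c)`_k * s`_k.
Proof.
elim: m s c => [|b m IH] [|x s] c //=; first by rewrite !big_ord0.
move=> /succn_inj sz.
case: b => /=; last by rewrite big_ord_recl /= rmorph0 mul0r add0r IH.
rewrite !big_ord_recl -(IH _ (behead c)) //; congr (_ + _).
by apply: eq_bigr => k _; rewrite lift0 -nth_behead.
Qed.

Lemma qspan_dim_ge s (K : 'M[rat]_(size s)) :
  (forall w, qcomb w = 0 -> (w <= K)%MS) -> (size s - \rank K <= qspan_dim s)%N.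
Proof.
(* The positions of a maximal free set of rows of [cokermx K] index a Q-independent
   subfamily of [s]. *)
move=> relK; pose Ck := cokermx K; pose f := maxrankfun Ck.
pose S := [set f t | t in 'I_(\rank Ck)].
pose m := [tuple i \in S | i < size s].
have sz_m : size m = size s by rewrite size_tuple.
have count_m : count id m = \rank Ck.
  rewrite -[RHS]card_ord -(card_imset _ (@maxrankfun_inj _ _ _ Ck)) cardE /enum_mem -enumT.
  by rewrite count_map -size_filter.
rewrite -mxrank_coker -count_m.
apply: (@leq_bigmax_cond _ (fun m : (size s).-tuple bool => `[< qindep (mask m s) >])
  (fun m => count id m) m).
apply/asboolP.
move=> c sz_c; rewrite qcomb_mask // => rel_c; apply: scatter_eq0; first by rewrite sz_c size_mask.
pose v : 'rV[rat]_(size s) := \row_i (scatter m c)`_i.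
have m_out i : i \notin S -> (scatter m c)`_i = 0.
  by move=> iS; rewrite nth_scatter_false // (nth_map i) ?size_enum_ord // nth_ord_enum (negbTE iS).
have vCk : v *m Ck = 0.
  by apply/eqP; rewrite -submxE relK // -[RHS]rel_c; apply: eq_bigr => k _; rewrite mxE.
pose w : 'rV[rat]_(\rank Ck) := \row_t v 0 (f t).
have wCk : w *m rowsub f Ck = 0.
  rewrite -vCk; apply/rowP => j; rewrite !mxE (bigID (mem S)) /= [X in _ + X]big1 ?addr0.
    by rewrite big_imset /=; [apply: eq_bigr => t _; rewrite !mxE | move=> ? ? _ _ /maxrankfun_inj].
  by move=> i iS; rewrite mxE m_out ?mul0r.
have /rowP w0 : w = 0 by apply: (row_free_inj (maxrowsub_free Ck)); rewrite mul0mx.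
move=> i.
have [lt_is|] := ltnP i (size s); last by move=> le_si; rewrite nth_default ?size_scatter ?sz_m.
have [/imsetP [t _ it]|/m_out //] := boolP (Ordinal lt_is \in S).
by have := w0 t; rewrite !mxE -it.
Qed.

Lemma qspan_dim_kernel s n (L : 'M[rat]_(n, size s)) : exists U : 'M[rat]_n,
  (forall x, (x <= U)%MS -> qcomb (x *m L) = 0) /\ (n - \rank U <= qspan_dim s)%N.
Proof.
have [K relK] := relation_space s.
exists (kermx (L *m cokermx K)); split=> [x /sub_kermxP|].
  by rewrite mulmxA => /eqP; rewrite -submxE => /relK.
rewrite mxrank_ker subKn ?rank_leq_row //.
apply: leq_trans (mxrankM_maxr _ _) _; rewrite mxrank_coker.
by apply: qspan_dim_ge => w /relK.
Qed.

Lemma qspan_dim_le_span s (b : seq C) :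
  (forall x, x \in s -> exists2 c : seq rat, size c = size b &
     x = \sum_(k < size b) ratr c`_k * b`_k) ->
  (qspan_dim s <= size b)%N.
Proof.
move=> span_b; apply/bigmax_leqP => m /asboolP indep_t; set t := mask m s in indep_t *.
rewrite -(size_mask (size_tuple m)) -/t.
have /fin_all_exists [cf cfE] (k : 'I_(size t)) : exists c : seq rat, size c = size b /\
    t`_k = \sum_(l < size b) ratr c`_l * b`_l.
  by have [|c] := span_b t`_k; [exact: mem_mask (mem_nth 0 _) | exists c].
pose V : 'M[rat]_(size t, size b) := \matrix_(k, l) (cf k)`_l.
suff /eqP <- : row_free V by exact: rank_leq_col.
rewrite -kermx_eq0; apply/eqP/row_matrixP => k; rewrite row0.
move: (row k (kermx V)) (row_sub k (kermx V)) => w /sub_kermxP wV.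
pose c := [seq w 0 k | k <- enum 'I_(size t)].
have cE (k0 : 'I_(size t)) : c`_k0 = w 0 k0.
  by rewrite (nth_map k0) ?size_enum_ord // nth_ord_enum.
apply/rowP => k0; rewrite mxE -cE; apply: (indep_t c); first by rewrite size_map size_enum_ord.
transitivity (\sum_(l < size b) ratr ((w *m V) 0 l) * b`_l); last first.
  by rewrite wV big1 // => l _; rewrite mxE rmorph0 mul0r.
under eq_bigr do rewrite cE (proj2 (cfE _)) mulr_sumr.
rewrite exchange_big /=; apply: eq_bigr => l _; rewrite mxE rmorph_sum mulr_suml.
by apply: eq_bigr => k1 _; rewrite mxE rmorphM mulrA.
Qed.
End QSpan.

Section FormInvariance.
Variable F : comUnitRingType.

Lemma conj_form_invariant n (P K N : 'M[F]_n) : P \in unitmx -> K^T *m N *m K = N ->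
  let J := invmx P *m K *m P in J^T *m (P^T *m N *m P) *m J = P^T *m N *m P.
Proof.
move=> Pu KNK J; rewrite -[in RHS]KNK /J !trmx_mul !mulmxA -[_ *m P^T]mulmxA -trmx_mul.
by rewrite -[(invmx P)^T *m P^T]trmx_mul mulmxV // trmx1 mulmx1 mulmxK.
Qed.

Variable g : nat.

Lemma block_form_invariant (N1 N2 : 'M[F]_g) :
  let K := block_mx 0 (- 1%:M) 1%:M 0 in
  K^T *m block_mx N1 N2 (- N2) N1 *m K = block_mx N1 N2 (- N2) N1.
Proof.
move=> K; rewrite /K tr_block_mx !mulmx_block !trmx0 !linearN /= !tr_scalar_mx.
by rewrite !(mul0mx, mulmx0, mul1mx, mulmx1, mulNmx, add0r, addr0, sub0r, subr0, opprK).
Qed.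

Lemma period_unitmx (X Y : 'M[F]_g) : Y \in unitmx -> block_mx X 1%:M Y 0 \in unitmx.
Proof.
move=> Yu; suff /mulmx1_unit[] : block_mx X 1%:M Y 0 *m
    block_mx 0 (invmx Y) 1%:M (- (X *m invmx Y)) = 1%:M by [].
rewrite mulmx_block !mulmx0 !mul0mx !mulmx1 !mul1mx !add0r addr0 subrr mulmxV //.
by rewrite -scalar_mx_block.
Qed.

(* Unlike [mxE], these leave the entries of matrix products folded, so that [ring]
   treats them as atoms. *)
Lemma addmxE m n (U W : 'M[F]_(m, n)) a b : (U + W) a b = U a b + W a b.
Proof. by rewrite mxE. Qed.

Lemma oppmxE m n (U : 'M[F]_(m, n)) a b : (- U) a b = - U a b.
Proof. by rewrite mxE. Qed.

Variables (X Y A B D : 'M[F]_g).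
Hypothesis Y_unit : Y \in unitmx.
Hypothesis re_eq0 : A + X^T *m B^T - B *m X + X^T *m D *m X - Y^T *m D *m Y = 0.
Hypothesis im_eq0 : Y^T *m B^T - B *m Y + X^T *m D *m Y + Y^T *m D *m X = 0.

(* In the coordinates N := P^-T Mr P^-1, J acts by the block matrix of multiplication
   by i, which preserves N iff N = [[N1, N2], [-N2, N1]]; the two hypotheses say
   Y^T (N4 - N1) Y = 0 and Y^T (N2 + N3) Y = 0. *)
Lemma period_form_invariant :
  let P := block_mx X 1%:M Y 0 in let J := invmx P *m block_mx 0 (- 1%:M) 1%:M 0 *m P in
  J^T *m block_mx A B (- B^T) D *m J = block_mx A B (- B^T) D.
Proof.
move=> P J; have Pu : P \in unitmx by exact: period_unitmx.
set Mr := block_mx _ _ _ _; pose N := (invmx P)^T *m Mr *m invmx P.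
have MrE : Mr = P^T *m N *m P.
  by rewrite /N !mulmxA -trmx_mul mulVmx // trmx1 mul1mx mulmxKV.
have blocks := MrE; rewrite -(submxK N) /P /Mr tr_block_mx !mulmx_block trmx1 trmx0 in blocks.
rewrite !(mul1mx, mul0mx, mulmx1, mulmx0, addr0) in blocks.
case/eq_block_mx: blocks => NA NB NBt ND.
set N1 := ulsubmx N in NA NB NBt ND; set N2 := ursubmx N in NA NB NBt ND.
set N3 := dlsubmx N in NA NB NBt ND; set N4 := drsubmx N in NA NB NBt ND.
have {}NBt : B^T = - (N1 *m X + N2 *m Y) by rewrite -NBt opprK.
have sandwich_eq0 Z : Y^T *m Z *m Y = 0 -> Z = 0.
  move=> /(congr1 (fun W => invmx Y^T *m (W *m invmx Y))).
  by rewrite /= mulmxK // mulKmx ?unitmx_tr // mul0mx mulmx0.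
have N41 : N4 = N1.
  apply/eqP; rewrite -subr_eq0; apply/eqP/sandwich_eq0; rewrite -re_eq0 NBt NA NB ND.
  rewrite ?(mulmxDl, mulmxDr, mulmxN, mulNmx, mulmxA).
  by apply/matrixP => a b; rewrite ?(addmxE, oppmxE); ring.
have N32 : N3 = - N2.
  apply/eqP; rewrite -addr_eq0 addrC; apply/eqP/sandwich_eq0.
  rewrite -[RHS]oppr0 -im_eq0 NBt NB ND.
  rewrite ?(mulmxDl, mulmxDr, mulmxN, mulNmx, mulmxA).
  by apply/matrixP => a b; rewrite ?(addmxE, oppmxE); ring.
rewrite MrE; apply: conj_form_invariant => //.
by rewrite -(submxK N) -/N1 -/N2 -/N3 -/N4 N41 N32 block_form_invariant.
Qed.
End FormInvariance.

Lemma big_nth_zip (V : nmodType) (A B : Type) (a0 : A) (b0 : B) (s : seq A) (t : seq B)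
    (F : A -> B -> V) : size s = size t ->
  \sum_(k < size t) F (nth a0 s k) (nth b0 t k) = \sum_(p <- zip s t) F p.1 p.2.
Proof.
elim: t s => [|y t IH] [|x s] //=; first by rewrite big_ord0 big_nil.
by move=> /succn_inj sz; rewrite big_ord_recl big_cons IH.
Qed.

Lemma zip_allpairs (S T A B : Type) (f : S -> T -> A) (h : S -> T -> B) s t :
  zip [seq f x y | x <- s, y <- t] [seq h x y | x <- s, y <- t] =
  [seq (f x y, h x y) | x <- s, y <- t].
Proof. by elim: s => //= x s IH; rewrite zip_cat ?size_map // zip_map IH. Qed.

Lemma sum_antisym_wedge (V : comPzRingType) n (d : 'I_n -> 'I_n -> V) (a b : 'I_n -> V) :
  (forall l k, d l k = - d k l) ->
  \sum_l \sum_k d l k * (a l * b k - a k * b l) = 2 * \sum_l \sum_k a l * d l k * b k.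
Proof.
move=> d_anti; have swap : \sum_l \sum_k d l k * (a k * b l) = - \sum_l \sum_k a l * d l k * b k.
  rewrite exchange_big -sumrN; apply: eq_bigr => l _; rewrite -sumrN.
  by apply: eq_bigr => k _; rewrite d_anti; ring.
under eq_bigr do rewrite (eq_bigr _ (fun k _ => mulrBr _ _ _)) sumrB.
rewrite sumrB swap opprK mulr2n mulrDl mul1r.
by congr (_ + _); apply: eq_bigr => l _; apply: eq_bigr => k _; ring.
Qed.

Section HodgeDefect.
Variables (V : comPzRingType) (g : nat) (tau : 'M[V]_g).

(* For alternating M this is W^T M W with W = col_mx 1 (- tau), whose columns span
   the kernel of (tau I): the restriction of the complexified form to that kernel. *)
Definition hodge_defect (M : 'M[V]_(g + g)) : 'M[V]_g :=
  ulsubmx M + tau^T *m (ursubmx M)^T - ursubmx M *m tau + tau^T *m drsubmx M *m tau.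

Lemma hodge_defect_tr M : M^T = - M -> (hodge_defect M)^T = - hodge_defect M.
Proof.
rewrite -{1 2}[M]submxK tr_block_mx opp_block_mx => /eq_block_mx[ulT _ _ drT].
rewrite /hodge_defect !linearD !linearN /= !trmx_mul !trmxK ulT drT.
by rewrite mulNmx mulmxN mulmxA opprK; congr (_ + _); exact: addrAC.
Qed.
End HodgeDefect.

Section RealImagParts.
Variable R : realType.
Local Notation C := R[i].
Local Notation ReM := (map_mx (@complex.Re R : Rcomplex R -> R)).
Local Notation ImM := (map_mx (@complex.Im R : Rcomplex R -> R)).
Local Notation toC := (map_mx (real_complex R)).

Lemma ReM_mul m n p (U : 'M[C]_(m, n)) (W : 'M[C]_(n, p)) :
  ReM (U *m W) = ReM U *m ReM W - ImM U *m ImM W.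
Proof.
apply/matrixP => a b; rewrite !mxE (raddf_sum (@complex.Re R : Rcomplex R -> R)) -sumrB.
by apply: eq_bigr => k _; rewrite !mxE; case: (U a k) => ? ?; case: (W k b).
Qed.

Lemma ImM_mul m n p (U : 'M[C]_(m, n)) (W : 'M[C]_(n, p)) :
  ImM (U *m W) = ReM U *m ImM W + ImM U *m ReM W.
Proof.
apply/matrixP => a b; rewrite !mxE (raddf_sum (@complex.Im R : Rcomplex R -> R)) -big_split.
apply: eq_bigr => k _; rewrite !mxE.
by case: (U a k) => ? ?; case: (W k b) => ? ? /=; rewrite addrC.
Qed.

Lemma ReM_toC m n (A : 'M[R]_(m, n)) : ReM (toC A) = A.
Proof. by apply/matrixP => a b; rewrite !mxE. Qed.

Lemma ImM_toC m n (A : 'M[R]_(m, n)) : ImM (toC A) = 0.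
Proof. by apply/matrixP => a b; rewrite !mxE. Qed.

Variables (g : nat) (tau : 'M[C]_g) (Mr : 'M[R]_(g + g)).
Let X := ReM tau.
Let Y := ImM tau.
Let A := ulsubmx Mr.
Let B := ursubmx Mr.
Let D := drsubmx Mr.

Lemma ReM_hodge_defect :
  ReM (hodge_defect tau (toC Mr)) = A + X^T *m B^T - B *m X + X^T *m D *m X - Y^T *m D *m Y.
Proof.
rewrite /hodge_defect -map_ulsubmx -map_ursubmx -map_drsubmx !map_mxD map_mxN.
rewrite !(ReM_mul, ImM_mul) !map_trmx !ReM_toC !ImM_toC.
by rewrite !mulmx0 !mul0mx !subr0 add0r addrA.
Qed.

Lemma ImM_hodge_defect :
  ImM (hodge_defect tau (toC Mr)) = Y^T *m B^T - B *m Y + X^T *m D *m Y + Y^T *m D *m X.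
Proof.
rewrite /hodge_defect -map_ulsubmx -map_ursubmx -map_drsubmx !map_mxD map_mxN.
rewrite !(ReM_mul, ImM_mul) !map_trmx !ReM_toC !ImM_toC.
by rewrite !mulmx0 !mul0mx !subr0 !add0r addr0 addrA.
Qed.
End RealImagParts.

Section DijFamily.
Variables (R : realType) (g : nat) (tau : 'M[R[i]]_g).

(* Coefficients of 2 * (hodge_defect M) i j against [dij_family], term by term; the
   factor 2 lets the quadratic term tau^T D tau be rewritten with the 2x2 minors. *)
Definition dij_weights (i j : 'I_g) : seq (rat * ('I_(g + g) * 'I_(g + g))) :=
  (2, (lshift g i, lshift g j)) ::
  [seq (2, (lshift g j, rshift g k)) | k <- enum 'I_g] ++
  [seq (-2, (lshift g i, rshift g k)) | k <- enum 'I_g] ++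
  [seq (1, (rshift g l, rshift g k)) | l <- enum 'I_g, k <- enum 'I_g].

Definition dij_coef i j (M : 'M[rat]_(g + g)) : seq rat :=
  [seq w.1 * M w.2.1 w.2.2 | w <- dij_weights i j].

Lemma size_dij_coef i j M : size (dij_coef i j M) = size (dij_family tau i j).
Proof. by rewrite size_map /= !size_cat !size_map !size_allpairs. Qed.

Lemma dij_coef_comb i j M : M^T = - M ->
  \sum_(k < size (dij_family tau i j)) ratr (dij_coef i j M)`_k * (dij_family tau i j)`_k =
  2 * hodge_defect tau (map_mx ratr M) i j.
Proof.
move=> M_anti; rewrite (big_nth_zip _ _ (fun c z => ratr c * z)) ?size_dij_coef //.
rewrite /dij_coef /dij_family /= big_cons !map_cat !zip_cat ?size_map ?size_allpairs //.
rewrite -!map_comp !zip_map map_allpairs zip_allpairs !big_cat !big_map big_allpairs_dep /=.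
rewrite !enumT; set Mc := map_mx ratr M.
have ratrM (c : rat) a b : ratr (c * M a b) = ratr c * Mc a b by rewrite rmorphM mxE.
have M_anti' a b : M a b = - M b a by have /matrixP/(_ b a) := M_anti; rewrite !mxE.
rewrite sum_antisym_wedge; last by move=> l k; rewrite M_anti' mulrN rmorphN.
rewrite /hodge_defect !mxE !mulrDr mulrN !addrA; congr (_ + _ + _ + _).
- by rewrite ratrM rmorph_nat mulr1 mxE.
- rewrite mulr_sumr; apply: eq_bigr => k _; rewrite ratrM rmorph_nat !mxE; ring.
- rewrite mulr_sumr -sumrN; apply: eq_bigr => k _; rewrite ratrM rmorphN rmorph_nat !mxE; ring.
rewrite exchange_big /=; congr (2 * _); apply: eq_bigr => k _; rewrite !mxE mulr_suml.
by apply: eq_bigr => l _; rewrite ratrM rmorph1 mul1r !mxE.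
Qed.
End DijFamily.

Section FieldDegree.
Variables (R : realType) (g : nat) (tau : 'M[R[i]]_g).

Lemma gen_field_family i j x : x \in dij_family tau i j -> gen_field tau x.
Proof.
have gen_tau k l : gen_field tau (tau k l) by move=> S _; apply.
rewrite /dij_family in_cons => /predU1P[-> S [] //|].
rewrite !mem_cat => /or3P[/mapP[k _ ->] | /mapP[k _ ->] | /allpairsP[[l k] [_ _ ->]]] //=.
by move=> S [_ SB SM _] Stau; apply: SB; apply: SM; apply: Stau.
Qed.

Lemma dij_le_field_degree d i j : field_degree tau d -> (dij tau i j <= d)%N.
Proof.
case=> b [<- _ _ span_b]; apply: qspan_dim_le_span => x /gen_field_family /span_b[c [sz_c ->]].
by exists c.
Qed.
End FieldDegree.

Section PicardBound.
Variables (R : realType) (g : nat) (tau : 'M[R[i]]_g).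
Local Notation N := #|{: alt_index (g + g)}|.
Local Notation S := (\sum_(i < g) \sum_(j < g | (i < j)%N) dij tau i j)%N.
Hypothesis Im_tau_unit : \det (map_mx (fun z : R[i] => complex.Im z) tau) != 0.

Lemma NSQ_hodge_defect_eq0 (M : 'M[rat]_(g + g)) :
  M^T = - M -> hodge_defect tau (map_mx ratr M) = 0 -> NSQ tau M.
Proof.
move=> M_anti defect0; split=> // Mr.
have MrC : map_mx ratr M = map_mx (real_complex R) Mr.
  by apply/matrixP => a b; rewrite !mxE fmorph_rat.
have Mr_anti : Mr^T = - Mr by rewrite map_trmx M_anti map_mxN.
have := Mr_anti; rewrite -{1 2}[Mr]submxK tr_block_mx opp_block_mx => /eq_block_mx[_ _ Mr_dl _].
have <- : block_mx (ulsubmx Mr) (ursubmx Mr) (- (ursubmx Mr)^T) (drsubmx Mr) = Mr.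
  by rewrite Mr_dl opprK submxK.
rewrite MrC in defect0; apply: period_form_invariant; first by rewrite unitmxE unitfE.
- by rewrite -ReM_hodge_defect defect0 map_mx0.
- by rewrite -ImM_hodge_defect defect0 map_mx0.
Qed.

Lemma picard_number_ge_rank (W : 'M[rat]_N) :
  (forall x, (x <= W)%MS -> NSQ tau (alt_mx x)) -> (\rank W <= picard_number tau)%N.
Proof.
move=> W_NSQ; set r := \rank W; pose Wb := row_base W.
have r_lt : (r < ((g + g) ^ 2).+1)%N.
  have := rank_leq_col W; have := mul2_bin2 (g + g); rewrite -card_alt_index -/r; nia.
apply: (@leq_bigmax_cond _ _ (fun n : 'I_((g + g) ^ 2).+1 => val n) (Ordinal r_lt)); apply/asboolP.
exists [tuple alt_mx (row l Wb) | l < r]; split; first exact: size_tuple.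
- apply/freeP => k k_rel l; pose w : 'rV[rat]_r := \row_l k l.
  have wWb0 : w *m Wb = 0.
    apply: alt_mx_eq0; rewrite alt_mx_mulmx -[RHS]k_rel; apply: eq_bigr => l' _.
    by rewrite mxE -tnth_nth tnth_mktuple.
  have /rowP/(_ l) : w = 0 by apply: (row_free_inj (row_base_free W)); rewrite wWb0 mul0mx.
  by rewrite !mxE.
- move=> M /mapP[l _ ->]; apply: W_NSQ.
  by rewrite -(eq_row_base W) row_sub.
Qed.

Definition dij_coef_mx i j : 'M[rat]_(N, size (dij_family tau i j)) :=
  \matrix_(t, k) (dij_coef i j (alt_basis _ t))`_k.

Lemma dij_coef_mxE i j x k : (x *m dij_coef_mx i j) 0 k = (dij_coef i j (alt_mx x))`_k.
Proof.
rewrite mxE /dij_coef; pose w0 := (1 : rat, (lshift g i, lshift g j)).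
have [lt_k|le_k] := ltnP k (size (dij_weights i j)); last first.
  by rewrite nth_default ?size_map // big1 // => t _; rewrite mxE nth_default ?size_map ?mulr0.
rewrite (nth_map w0) // alt_mxE mulr_sumr; apply: eq_bigr => t _.
by rewrite mxE (nth_map w0) // mulrCA.
Qed.

Lemma picard_number_lower_bound : ((2 * g ^ 2 - g) - S <= picard_number tau)%N.
Proof.
have /fin_all_exists[U U_ker] (i : 'I_g) : exists U : 'I_g -> 'M[rat]_N, forall j,
    (forall x, (x <= U j)%MS -> qcomb (x *m dij_coef_mx i j) = 0) /\
    (N - \rank (U j) <= dij tau i j)%N.
  exact: fin_all_exists (fun j => qspan_dim_kernel (dij_coef_mx i j)).
pose W := (\bigcap_(i : 'I_g) \bigcap_(j : 'I_g | (i < j)%N) U i j)%MS.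
have codimW : (N - \rank W <= S)%N.
  apply: leq_trans (codim_bigcapmx _ _) _; apply: leq_sum => i _.
  by apply: leq_trans (codim_bigcapmx _ _) _; apply: leq_sum => j _; case: (U_ker i j).
have W_NSQ x : (x <= W)%MS -> NSQ tau (alt_mx x).
  move=> xW; apply: (NSQ_hodge_defect_eq0 (alt_mx_tr x)).
  have Mc_anti : (map_mx ratr (alt_mx x) : 'M[R[i]]_(g + g))^T = - map_mx ratr (alt_mx x).
    by rewrite map_trmx alt_mx_tr map_mxN.
  apply: alternating_eq0 => [|i j lt_ij]; first exact: hodge_defect_tr.
  have xU : (x <= U i j)%MS by move/sub_bigcapmxP: xW => /(_ i isT)/sub_bigcapmxP/(_ j lt_ij).
  have := (U_ker i j).1 x xU; rewrite /qcomb; under eq_bigr do rewrite dij_coef_mxE.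
  by rewrite dij_coef_comb ?alt_mx_tr // => /eqP; rewrite mulf_eq0 pnatr_eq0 => /eqP.
have := picard_number_ge_rank W_NSQ; have := mul2_bin2 (g + g); rewrite -card_alt_index; nia.
Qed.

Lemma sum_dij_le_field_degree d : field_degree tau d -> (2 * S <= d * (g * g.-1))%N.
Proof.
move=> deg_d; rewrite -mul2_bin2 -sum_ltn_pairs mulnCA leq_mul2l /= big_distrr /=.
apply: leq_sum => i _; rewrite big_distrr /=; apply: leq_sum => j _.
by rewrite muln1 (dij_le_field_degree _ _ deg_d).
Qed.
End PicardBound.

Theorem proposition2p3 (R : realType) (g : nat) (tau : 'M[R[i]]_g)
    (hIm : \det (map_mx (fun z : R[i] => complex.Im z) tau) != 0) :
  let S := (\sum_(i < g) \sum_(j < g | (i < j)%N) dij tau i j)%N in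
  ((2 * g ^ 2 - g)%:R - S%:R <= (picard_number tau)%:R :> rat) /\
  (forall d : nat, field_degree tau d ->
     (g ^ 2)%:R - (g * (g - 1))%:R * (d%:R / 2 - 1) <= (2 * g ^ 2 - g)%:R - S%:R :> rat).
Proof.
move=> S; split=> [|d /sum_dij_le_field_degree].
  have := picard_number_lower_bound hIm; rewrite -/S leq_subLR -(ler_nat rat) natrD.
  by move=> ?; lra.
rewrite -subn1 => le2S; have g_le : (g <= 2 * g ^ 2)%N by nia.
have gg_le : (g <= g * g)%N by nia.
rewrite mulnBr muln1 -(ler_nat rat) !natrM natrB // in le2S.
rewrite mulnBr muln1 !natrB // !natrM; lra.
Qed.
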